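(* Fix $n\ge 2$, a dictator agent $t\in\{1,\dots,n\}$, and parameters $k\in[2,+\infty)$ and $a\in(0,1)$. Let $f$ be the mechanism that, on a profile $\mathbf{x}=(x_1,\dots,x_n)$ with $x_l=\min\mathbf{x}$, $x_r=\max\mathbf{x}$, $L=x_r-x_l$, outputs $l_1=x_t$ and $$l_2=\begin{cases} x_t+\max\left\{\frac{(1-a)k}{a}(x_t-x_l),\; x_r-x_t\right\} & \text{if } x_t\in[x_l,\,x_l+aL),\\[2pt] x_t-\max\left\{x_t-x_l,\; \frac{ak}{1-a}(x_r-x_t)\right\} & \text{if } x_t\in[x_l+aL,\,x_r].\end{cases}$$ Then $f$ is strategy-proof.
   Context: Two-facility game on a line: agent $i\in\{1,\dots,n\}$ has location $x_i\in\mathbb{R}$. A mechanism outputs two facility locations $\{l_1,l_2\}$; an agent at $y$ has cost $\min\{|l_1-y|,|l_2-y|\}$. A mechanism $f$ is strategy-proof if for every agent $i$, every profile $\mathbf{x}=\langle x_i,\mathbf{x}_{-i}\rangle$ and every $x_i'\in\mathbb{R}$, the cost of agent $i$ (at true location $x_i$) under $f(x_i,\mathbf{x}_{-i})$ is at most her cost under $f(x_i',\mathbf{x}_{-i})$. *)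

From Stdlib Require Import Reals Lra Lia.
Open Scope R_scope.

(* A profile of n agents: x : nat -> R, agent i (0 <= i < n) at x i.
   Only the values x 0, ..., x (n-1) are relevant. *)

Fixpoint pmin (x : nat -> R) (m : nat) : R :=
  match m with O => x O | S m' => Rmin (pmin x m') (x m) end.
Fixpoint pmax (x : nat -> R) (m : nat) : R :=
  match m with O => x O | S m' => Rmax (pmax x m') (x m) end.

Definition xl (n : nat) (x : nat -> R) : R := pmin x (n - 1).
Definition xr (n : nat) (x : nat -> R) : R := pmax x (n - 1).

Definition mech (n t : nat) (k a : R) (x : nat -> R) : R * R :=
  let l := xl n x in
  let r := xr n x in
  let L := r - l in
  let xt := x t in
  (xt,
   if Rlt_dec xt (l + a * L) then
     xt + Rmax ((1 - a) * k / a * (xt - l)) (r - xt)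
   else
     xt - Rmax (xt - l) (a * k / (1 - a) * (r - xt))).

Definition cost (p : R * R) (y : R) : R :=
  Rmin (Rabs (fst p - y)) (Rabs (snd p - y)).

Definition update (x : nat -> R) (i : nat) (v : R) : nat -> R :=
  fun j => if Nat.eqb j i then v else x j.

Definition strategy_proof (n : nat) (f : (nat -> R) -> R * R) : Prop :=
  forall (i : nat) (x : nat -> R) (v : R), (i < n)%nat ->
    cost (f x) (x i) <= cost (f (update x i v)) (x i).

From Pilot Require Import Defs.
From Stdlib Require Import Reals Lra Lia.
Open Scope R_scope.

(* Agent t is a dictator and pays nothing.  Any other agent i moves the
   outcome only through the extremes x_l and x_r.  Say x_i <= x_t; the case
   x_t <= x_i is the mirror image, which exchanges the two branches.  A
   deviation of i can only push x_r to the right, and can only push x_l to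
   the left unless x_i = x_l.  If x_t lies in the left region, l_2 >= x_t and
   i pays x_t - x_i; because k >= 2 we have 2 (x_t - x_l) <= ak/(1-a) (x_r - x_t),
   so a deviation that brings l_2 to the left of x_t puts it at or beyond
   2 x_l - x_t, the reflection of x_t about x_l, which is no closer to x_i.
   If x_t lies in the right region, l_2 <= x_l <= x_i and a deviation can
   only move l_2 further to the left. *)

Lemma le_pmin (x : nat -> R) (N j : nat) : (j <= N)%nat -> pmin x N <= x j.
Proof.
  induction N as [|N IH]; simpl; intros Hj.
  - replace j with 0%nat by lia; lra.
  - destruct (Nat.eq_dec j (S N)) as [->|Hne]; [apply Rmin_r|].
    apply Rle_trans with (pmin x N); [apply Rmin_l|apply IH; lia].
Qed.

Lemma le_pmax (x : nat -> R) (N j : nat) : (j <= N)%nat -> x j <= pmax x N.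
Proof.
  induction N as [|N IH]; simpl; intros Hj.
  - replace j with 0%nat by lia; lra.
  - destruct (Nat.eq_dec j (S N)) as [->|Hne]; [apply Rmax_r|].
    apply Rle_trans with (pmax x N); [apply IH; lia|apply Rmax_l].
Qed.

Lemma pmin_attained (x : nat -> R) (N : nat) :
  exists j, (j <= N)%nat /\ pmin x N = x j.
Proof.
  induction N as [|N [j [Hj Ej]]]; simpl.
  - exists 0%nat; split; [lia|reflexivity].
  - unfold Rmin; destruct (Rle_dec (pmin x N) (x (S N))).
    + exists j; split; [lia|assumption].
    + exists (S N); split; [lia|reflexivity].
Qed.

Lemma pmax_attained (x : nat -> R) (N : nat) :
  exists j, (j <= N)%nat /\ pmax x N = x j.
Proof.
  induction N as [|N [j [Hj Ej]]]; simpl.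
  - exists 0%nat; split; [lia|reflexivity].
  - unfold Rmax; destruct (Rle_dec (pmax x N) (x (S N))).
    + exists (S N); split; [lia|reflexivity].
    + exists j; split; [lia|assumption].
Qed.

Lemma update_neq (x : nat -> R) (i j : nat) (v : R) :
  j <> i -> update x i v j = x j.
Proof.
  intros Hji; unfold update; destruct (Nat.eqb_spec j i); [contradiction|reflexivity].
Qed.

Lemma pmin_update_cases (x : nat -> R) (i N : nat) (v : R) :
  pmin (update x i v) N <= pmin x N \/ pmin x N = x i.
Proof.
  destruct (pmin_attained x N) as [j [Hj Ej]].
  destruct (Nat.eq_dec j i) as [->|Hji]; [right; exact Ej|left].
  rewrite Ej, <- (update_neq x i j v Hji); apply le_pmin; exact Hj.
Qed.

Lemma pmax_update_cases (x : nat -> R) (i N : nat) (v : R) :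
  pmax x N <= pmax (update x i v) N \/ pmax x N = x i.
Proof.
  destruct (pmax_attained x N) as [j [Hj Ej]].
  destruct (Nat.eq_dec j i) as [->|Hji]; [right; exact Ej|left].
  rewrite Ej, <- (update_neq x i j v Hji); apply le_pmax; exact Hj.
Qed.

Lemma cost_nonneg (p : R * R) (y : R) : 0 <= cost p y.
Proof. unfold cost; apply Rmin_glb; apply Rabs_pos. Qed.

Lemma cost_first (y p : R) : cost (y, p) y = 0.
Proof.
  unfold cost; simpl; rewrite Rminus_diag, Rabs_R0.
  apply Rle_antisym; [apply Rmin_l|apply Rmin_glb; [lra|apply Rabs_pos]].
Qed.

Lemma cost_le_of_dist (d p p' y : R) :
  cost (d, p) y <= Rabs (p' - y) -> cost (d, p) y <= cost (d, p') y.
Proof. intros H; apply Rmin_glb; [apply Rmin_l|exact H]. Qed.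

Lemma cost_opp (d p y : R) : cost (d, p) y = cost (-d, -p) (-y).
Proof.
  unfold cost; simpl.
  replace (-d - -y) with (-(d - y)) by ring.
  replace (-p - -y) with (-(p - y)) by ring.
  rewrite !Rabs_Ropp; reflexivity.
Qed.

(* The branch is a free parameter so that the reflection [z |-> -z] maps this
   family onto itself ([facility_opp]); the mechanism's tie-breaking at the
   threshold is not symmetric. *)
Definition facility (b : bool) (c1 c2 l r d : R) : R :=
  if b then d + Rmax (c1 * (d - l)) (r - d)
  else d - Rmax (d - l) (c2 * (r - d)).

Lemma facility_opp (b : bool) (c1 c2 l r d : R) :
  - facility b c1 c2 l r d = facility (negb b) c2 c1 (-r) (-l) (-d).
Proof.
  unfold facility; destruct b; simpl.
  - replace (-d - -r) with (r - d) by ring.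
    replace (-l - -d) with (d - l) by ring.
    rewrite Rmax_comm; ring.
  - replace (-d - -r) with (r - d) by ring.
    replace (-l - -d) with (d - l) by ring.
    rewrite Rmax_comm; ring.
Qed.

Lemma cost_facility_left (b b' : bool) (c1 c2 l r l' r' d y : R) :
  0 <= c2 -> l <= y <= d -> d <= r -> l' <= d <= r' ->
  (l' <= l \/ l = y) -> (r <= r' \/ r = y) ->
  (b = true -> 2 * (d - l) <= c2 * (r - d)) ->
  cost (d, facility b c1 c2 l r d) y <= cost (d, facility b' c1 c2 l' r' d) y.
Proof.
  intros Hc2 [Hly Hyd] Hdr [Hl'd Hdr'] Hl' Hr' Hgap.
  assert (Hrr : r <= r') by (destruct Hr'; lra).
  assert (Hcost_d : cost (d, facility b c1 c2 l r d) y <= d - y).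
  { rewrite <- (Rabs_pos_eq (d - y)) by lra; apply Rmin_l. }
  apply cost_le_of_dist.
  set (p' := facility b' c1 c2 l' r' d).
  destruct (Rle_or_lt d p') as [Hp'|Hp'].
  { rewrite Rabs_pos_eq by lra; lra. }
  assert (Hb' : b' = false).
  { destruct b'; [|reflexivity].
    unfold p', facility in Hp'; pose proof (Rmax_r (c1 * (d - l')) (r' - d)); lra. }
  assert (Hp'l' : p' <= l').
  { unfold p'; rewrite Hb'; simpl; pose proof (Rmax_l (d - l') (c2 * (r' - d))); lra. }
  assert (Hp'c2 : p' <= d - c2 * (r - d)).
  { unfold p'; rewrite Hb'; simpl.
    pose proof (Rmax_r (d - l') (c2 * (r' - d))).
    pose proof (Rmult_le_compat_l c2 (r - d) (r' - d) Hc2 ltac:(lra)); lra. }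
  destruct b.
  - (* p' lies beyond 2 l - d, the reflection of d about l. *)
    specialize (Hgap eq_refl); rewrite Rabs_left1 by lra; lra.
  - apply Rle_trans with (Rabs (facility false c1 c2 l r d - y)); [apply Rmin_r|].
    unfold facility, Rmax; destruct (Rle_dec (d - l) (c2 * (r - d))).
    + rewrite !Rabs_left1 by lra; lra.
    + destruct Hl' as [Hl' | ->].
      * rewrite !Rabs_left1 by lra; lra.
      * replace (d - (d - y) - y) with 0 by ring; rewrite Rabs_R0; apply Rabs_pos.
Qed.

Lemma cost_facility_right (b b' : bool) (c1 c2 l r l' r' d y : R) :
  0 <= c1 -> l <= d -> d <= y <= r -> l' <= d <= r' ->
  (l' <= l \/ l = y) -> (r <= r' \/ r = y) ->
  (b = false -> 2 * (r - d) <= c1 * (d - l)) ->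
  cost (d, facility b c1 c2 l r d) y <= cost (d, facility b' c1 c2 l' r' d) y.
Proof.
  intros Hc1 Hld Hy Hd Hl' Hr' Hgap.
  rewrite (cost_opp d (facility b _ _ _ _ _)), (cost_opp d (facility b' _ _ _ _ _)),
    !facility_opp.
  apply cost_facility_left; try lra.
  destruct b; simpl; [discriminate|]; intros _; specialize (Hgap eq_refl); lra.
Qed.

Definition in_left_region (a l r d : R) : bool :=
  if Rlt_dec d (l + a * (r - l)) then true else false.

Lemma mech_facility (n t : nat) (k a : R) (x : nat -> R) :
  mech n t k a x =
  (x t, facility (in_left_region a (xl n x) (Defs.xr n x) (x t))
           ((1 - a) * k / a) (a * k / (1 - a)) (xl n x) (Defs.xr n x) (x t)).
Proof.
  unfold mech, in_left_region; destruct (Rlt_dec _ _); reflexivity.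
Qed.

Lemma left_region_gap (k a l r d : R) :
  0 < a < 1 -> 2 <= k -> l <= d -> in_left_region a l r d = true ->
  2 * (d - l) <= a * k / (1 - a) * (r - d).
Proof.
  unfold in_left_region; intros Ha Hk Hld Hb.
  destruct (Rlt_dec d (l + a * (r - l))) as [Hd|]; [|discriminate].
  apply Rmult_le_reg_r with (1 - a); [lra|].
  replace (a * k / (1 - a) * (r - d) * (1 - a)) with (k * (a * (r - d)))
    by (field; lra).
  assert (0 <= (1 - a) * (d - l)) by (apply Rmult_le_pos; lra).
  assert (0 <= (k - 2) * (a * (r - d))) by (apply Rmult_le_pos; nra).
  nra.
Qed.

Lemma right_region_gap (k a l r d : R) :
  0 < a < 1 -> 2 <= k -> d <= r -> in_left_region a l r d = false ->
  2 * (r - d) <= (1 - a) * k / a * (d - l).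
Proof.
  unfold in_left_region; intros Ha Hk Hdr Hb.
  destruct (Rlt_dec d (l + a * (r - l))) as [|Hd]; [discriminate|].
  apply Rmult_le_reg_r with a; [lra|].
  replace ((1 - a) * k / a * (d - l) * a) with (k * ((1 - a) * (d - l)))
    by (field; lra).
  assert (0 <= a * (r - d)) by (apply Rmult_le_pos; lra).
  assert (0 <= (k - 2) * ((1 - a) * (d - l))) by (apply Rmult_le_pos; nra).
  nra.
Qed.

Theorem theorem3 (n t : nat) (k a : R) :
  (2 <= n)%nat -> (t < n)%nat -> 2 <= k -> 0 < a < 1 ->
  strategy_proof n (mech n t k a).
Proof.
  intros Hn Ht Hk Ha i x v Hi.
  destruct (Nat.eq_dec i t) as [->|Hit].
  { rewrite mech_facility, cost_first; apply cost_nonneg. }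
  rewrite !mech_facility, (update_neq x i t v) by lia.
  unfold xl, Defs.xr.
  assert (Hc1 : 0 <= (1 - a) * k / a) by (left; apply Rdiv_lt_0_compat; nra).
  assert (Hc2 : 0 <= a * k / (1 - a)) by (left; apply Rdiv_lt_0_compat; nra).
  assert (Hl : pmin x (n - 1) <= x i /\ pmin x (n - 1) <= x t) by (split; apply le_pmin; lia).
  assert (Hr : x i <= pmax x (n - 1) /\ x t <= pmax x (n - 1)) by (split; apply le_pmax; lia).
  assert (Hd' : pmin (update x i v) (n - 1) <= x t <= pmax (update x i v) (n - 1)).
  { rewrite <- (update_neq x i t v) by lia; split; [apply le_pmin|apply le_pmax]; lia. }
  destruct (Rle_or_lt (x i) (x t)).
  - apply cost_facility_left;
      [lra|lra|lra|lra|apply pmin_update_cases|apply pmax_update_cases|].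
    intros Hb; apply left_region_gap; [lra|lra|lra|exact Hb].
  - apply cost_facility_right;
      [lra|lra|lra|lra|apply pmin_update_cases|apply pmax_update_cases|].
    intros Hb; apply right_region_gap; [lra|lra|lra|exact Hb].
Qed.
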